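(* The two morphisms \[\mathbb{P}^1\times\mathbb{P}^1 \to \mathbb{P}^3,\quad [x_0:x_1]\times[y_0:y_1] \mapsto [x_0y_0^2 : x_1y_0^2 + 2x_0y_0y_1 : 2x_1y_0y_1 + x_0y_1^2 : x_1y_1^2],\] and \[\mathbb{P}^2\times\mathbb{P}^2 \to \mathbb{P}^8,\quad [x_0:x_1:x_2]\times[y_0:y_1:y_2] \mapsto [x_0y_0^2 : x_1y_1^2 : x_2y_2^2 : x_0y_1^2 + 2x_1y_0y_1 : x_1y_2^2 + 2x_2y_1y_2 : x_2y_0^2 + 2x_0y_0y_2 : 2x_0y_1y_2 + 2x_1y_0y_2 + 2x_2y_0y_1 : x_1y_0^2 - x_2y_1^2 + 2x_0y_0y_1 - 2x_1y_1y_2 : x_1y_0^2 - x_0y_2^2 + 2x_0y_0y_1 - 2x_2y_0y_2]\] are injective. In particular, $\operatorname{injdim}(\mathbb{P}^1\times\mathbb{P}^1,\mathcal{O}(1,2)) = 3$ and $\operatorname{injdim}(\mathbb{P}^2\times\mathbb{P}^2,\mathcal{O}(1,2)) \leq 8$.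
   Context: Over $\mathbb{C}$. For a line bundle $\mathscr{L}$ on a projective variety $X$ and a nonzero subspace $V \subseteq H^0(X,\mathscr{L})$, $\varphi_V \colon X \dashrightarrow \mathbb{P}(V^* )$ is the rational map given by the sections in $V$; $\operatorname{injdim}(X,\mathscr{L}) := \inf\{\dim V - 1 : \varphi_V \text{ is an injective morphism}\}$. *)

From mathcomp Require Import all_boot all_algebra.
From mathcomp Require Import reals complex.
From mathcomp Require Import mpoly.

Set Implicit Arguments.
Unset Strict Implicit.
Unset Printing Implicit Defensive.

Import GRing.Theory Num.Theory.
Local Open Scope ring_scope.

(* Points of P^a are represented by nonzero vectors in C^(a+1) = 'rV_(a.+1),
   two vectors representing the same point iff they are proportional.    *)
Definition proj_eq (K : fieldType) (k : nat) (u v : 'rV[K]_k) : Prop :=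
  exists c : K, c != 0 /\ u = c *: v.

(* Polynomials in the bihomogeneous coordinates x_0..x_a, y_0..y_b of
   P^a x P^b: variable number i < a.+1 is x_i, variable a.+1 + j is y_j. *)
Definition xvar (K : fieldType) (a b k : nat) : {mpoly K[a.+1 + b.+1]} :=
  'X_(lshift b.+1 (inord k : 'I_a.+1)).
Definition yvar (K : fieldType) (a b k : nat) : {mpoly K[a.+1 + b.+1]} :=
  'X_(rshift a.+1 (inord k : 'I_b.+1)).

Definition pt (K : fieldType) (a b : nat) (x : 'rV[K]_a.+1) (y : 'rV[K]_b.+1)
  : 'I_(a.+1 + b.+1) -> K :=
  fun i => match split i with inl j => x 0 j | inr j => y 0 j end.

(* H^0(P^a x P^b, O(d1,d2)): bihomogeneous polynomials of bidegree (d1,d2). *)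
Definition bihomog (K : fieldType) (a b d1 d2 : nat)
  (p : {mpoly K[a.+1 + b.+1]}) : Prop :=
  forall m : 'X_{1.. a.+1 + b.+1}, m \in msupp p ->
    (\sum_(i < a.+1) m (lshift b.+1 i))%N = d1 /\
    (\sum_(j < b.+1) m (rshift a.+1 j))%N = d2.

Definition lin_indep (K : fieldType) (n k : nat) (s : 'I_k -> {mpoly K[n]})
  : Prop :=
  forall c : 'I_k -> K, \sum_(i < k) c i *: s i = 0 -> forall i, c i = 0.

Definition phi (K : fieldType) (a b k : nat) (s : 'I_k -> {mpoly K[a.+1 + b.+1]})
  (x : 'rV[K]_a.+1) (y : 'rV[K]_b.+1) : 'rV[K]_k :=
  \row_(i < k) (s i).@[pt x y].

(* phi_s is a morphism (no base points) and is injective on points. *)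
Definition inj_morphism (K : fieldType) (a b k : nat)
  (s : 'I_k -> {mpoly K[a.+1 + b.+1]}) : Prop :=
  (forall x y, x != 0 -> y != 0 -> phi s x y != 0) /\
  (forall x y x' y', x != 0 -> y != 0 -> x' != 0 -> y' != 0 ->
     proj_eq (phi s x y) (phi s x' y') -> proj_eq x x' /\ proj_eq y y').

(* N belongs to { dim V - 1 : V <= H^0(O(1,2)), phi_V injective morphism }:
   V is spanned by a linearly independent family s_0..s_N of sections.  *)
Definition injdim_cand (K : fieldType) (a b N : nat) : Prop :=
  exists s : 'I_N.+1 -> {mpoly K[a.+1 + b.+1]},
    (forall i, bihomog 1 2 (s i)) /\ lin_indep s /\ inj_morphism s.

Definition injdim_O12_eq (K : fieldType) (a b N : nat) : Prop :=
  injdim_cand K a b N /\ forall M, injdim_cand K a b M -> (N <= M)%N.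

Definition injdim_O12_le (K : fieldType) (a b N : nat) : Prop :=
  exists M, (M <= N)%N /\ injdim_cand K a b M.

Section Explicit.
Variable K : fieldType.
Local Notation x1 k := (xvar K 1 1 k).
Local Notation y1 k := (yvar K 1 1 k).
Definition sec1 (i : 'I_4) : {mpoly K[1.+1 + 1.+1]} :=
  nth 0 [:: x1 0 * y1 0 ^+ 2;
            x1 1 * y1 0 ^+ 2 + 2%:R * x1 0 * y1 0 * y1 1;
            2%:R * x1 1 * y1 0 * y1 1 + x1 0 * y1 1 ^+ 2;
            x1 1 * y1 1 ^+ 2] i.
Local Notation x k := (xvar K 2 2 k).
Local Notation y k := (yvar K 2 2 k).
Definition sec2 (i : 'I_9) : {mpoly K[2.+1 + 2.+1]} :=
  nth 0 [:: x 0 * y 0 ^+ 2;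
            x 1 * y 1 ^+ 2;
            x 2 * y 2 ^+ 2;
            x 0 * y 1 ^+ 2 + 2%:R * x 1 * y 0 * y 1;
            x 1 * y 2 ^+ 2 + 2%:R * x 2 * y 1 * y 2;
            x 2 * y 0 ^+ 2 + 2%:R * x 0 * y 0 * y 2;
            2%:R * x 0 * y 1 * y 2 + 2%:R * x 1 * y 0 * y 2 + 2%:R * x 2 * y 0 * y 1;
            x 1 * y 0 ^+ 2 - x 2 * y 1 ^+ 2 + 2%:R * x 0 * y 0 * y 1
              - 2%:R * x 1 * y 1 * y 2;
            x 1 * y 0 ^+ 2 - x 0 * y 2 ^+ 2 + 2%:R * x 0 * y 0 * y 1
              - 2%:R * x 2 * y 0 * y 2] i.
End Explicit.

(* Both maps send (x, y) to linear data of the cubic form F_{x,y}(q) = (x.q) (y.q)^2: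
   the first one to the four coefficients of this binary cubic, the second one to the ten
   coefficients of this ternary cubic, projected from the point given by the smooth cubic
   C(q) = q0^2 q1 + q1^2 q2 + q2^2 q0.  Since x <> 0, F_{x,y} is singular exactly where
   y.q = 0; hence F_{x,y} determines y up to a scalar, and then x.  The projection loses no
   information: if F_{x,y} - c F_{x',y'} = t C, both sides are singular at a common zero of
   y.q and y'.q, which forces t = 0 because C is smooth.
   For the lower bound, a bihomogeneous family of at most three sections of O(1,2) on
   P^1 x P^1 is a pencil, in x, of linear maps applied to the conic (y0^2, y0 y1, y1^2);
   some member of the pencil has a kernel vector, and the secant of the conic through it
   yields non-proportional y, y' with proportional images. *)

From mathcomp Require Import all_boot all_algebra.
From mathcomp Require Import reals complex.
From mathcomp Require Import mpoly.
From mathcomp Require Import ring zify.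

Set Implicit Arguments.
Unset Strict Implicit.
Unset Printing Implicit Defensive.

Import GRing.Theory Num.Theory.
Local Open Scope ring_scope.

Lemma big_ord2 (R : Type) (idx : R) (op : Monoid.law idx) (F : 'I_2 -> R) :
  \big[op/idx]_(i < 2) F i = op (F 0) (F 1).
Proof.
by rewrite !big_ord_recl big_ord0 Monoid.mulm1; congr (op (F _) (F _)); apply: val_inj.
Qed.

Lemma big_ord3 (R : Type) (idx : R) (op : Monoid.law idx) (F : 'I_3 -> R) :
  \big[op/idx]_(i < 3) F i = op (op (F 0) (F 1)) (F 2%:R).
Proof.
rewrite !big_ord_recl big_ord0 Monoid.mulm1 Monoid.mulmA.
by congr (op (op (F _) (F _)) (F _)); apply: val_inj.
Qed.

Section DotProduct.
Variables (K : fieldType) (n : nat).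
Implicit Types (u v q r : 'rV[K]_n).

Definition dotv u v : K := (u *m v^T) 0 0.

Lemma dotvE u v : dotv u v = \sum_i u 0 i * v 0 i.
Proof. by rewrite /dotv mxE; apply: eq_bigr => i _; rewrite mxE. Qed.

Lemma dotvC u v : dotv u v = dotv v u.
Proof. by rewrite !dotvE; apply: eq_bigr => i _; rewrite mulrC. Qed.

Lemma dotv0l v : dotv 0 v = 0.
Proof. by rewrite /dotv mul0mx mxE. Qed.

Lemma dotvZl c u v : dotv (c *: u) v = c * dotv u v.
Proof. by rewrite /dotv -scalemxAl mxE. Qed.

Lemma dotvDr u v q : dotv u (v + q) = dotv u v + dotv u q.
Proof. by rewrite !dotvE -big_split; apply: eq_bigr => i _; rewrite mxE mulrDr. Qed.

Lemma dotvBr u v q : dotv u (v - q) = dotv u v - dotv u q.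
Proof. by rewrite !dotvE -sumrB; apply: eq_bigr => i _; rewrite !mxE mulrBr. Qed.

Lemma dotvZr c u v : dotv u (c *: v) = c * dotv u v.
Proof. by rewrite dotvC dotvZl dotvC. Qed.

Lemma dotv_delta u i : dotv u (delta_mx 0 i) = u 0 i.
Proof. by rewrite /dotv trmx_delta -colE mxE. Qed.

Lemma dotv_inj u v : (forall r, dotv u r = dotv v r) -> u = v.
Proof. by move=> h; apply/rowP => i; rewrite -!dotv_delta h. Qed.

Lemma dotv_eq1 v : v != 0 -> exists q, dotv v q = 1.
Proof.
move=> v_nz; have [i vi_nz] : exists i, v 0 i != 0.
  apply/existsP; apply: contraNT v_nz; rewrite negb_exists => /forallP h.
  by apply/eqP/rowP => i; rewrite mxE; apply/eqP/negPn.
by exists ((v 0 i)^-1 *: delta_mx 0 i); rewrite dotvZr dotv_delta mulVf.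
Qed.

Lemma proj_eq_orthogonal u v : u != 0 -> v != 0 ->
  (forall q, dotv v q = 0 -> dotv u q = 0) -> proj_eq u v.
Proof.
move=> u_nz v_nz uv; have [q0 vq0] := dotv_eq1 v_nz.
have uE : u = dotv u q0 *: v.
  apply: dotv_inj => r; rewrite dotvZl.
  have /uv : dotv v (r - dotv v r *: q0) = 0 by rewrite dotvBr dotvZr vq0 mulr1 subrr.
  by rewrite dotvBr dotvZr => /eqP; rewrite subr_eq0 mulrC => /eqP.
exists (dotv u q0); split => //; apply: contraNneq u_nz => u0.
by rewrite uE u0 scale0r.
Qed.

Lemma common_orthogonal u v : (2 < n)%N ->
  exists2 q, q != 0 & dotv u q = 0 /\ dotv v q = 0.
Proof.
move=> n_gt2; set A := (col_mx u v)^T.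
have : kermx A != 0.
  rewrite kermx_eq0 /row_free; apply: contraTneq n_gt2 => <-.
  by rewrite -leqNgt rank_leq_col.
case/rowV0Pn => q /sub_kermxP qA q_nz; exists q => //.
move: qA; rewrite /A tr_col_mx mul_mx_row => /eqP; rewrite row_mx_eq0 => /andP[].
by move=> /eqP uq /eqP vq; rewrite !(dotvC _ q) /dotv uq vq mxE.
Qed.

End DotProduct.

Section CubicForms.
Variables (K : numFieldType) (n : nat).
Implicit Types (x y q r : 'rV[K]_n) (f g : 'rV[K]_n -> K).

Definition cubic x y q : K := dotv x q * dotv y q ^+ 2.

(* For a cubic form f, [polar f q r] is the derivative of f at q in the direction r;
   defining it through values makes it commute with linear combinations of forms. *)
Definition polar f q r : K := (f (q + r) - f (q - r)) / 2%:R - f r.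

Definition nonsingular f : Prop := forall q, q != 0 -> exists r, polar f q r != 0.

Lemma polar_cubic x y q r : polar (cubic x y) q r =
  dotv x r * dotv y q ^+ 2 + 2%:R * dotv x q * dotv y q * dotv y r.
Proof. by rewrite /polar /cubic !dotvBr !dotvDr; field. Qed.

Lemma polarZ f g c q r : (forall q, f q = c * g q) -> polar f q r = c * polar g q r.
Proof. by move=> fE; rewrite /polar !fE; ring. Qed.

Lemma polar_comb f g h c d q r : (forall q, f q = c * g q + d * h q) ->
  polar f q r = c * polar g q r + d * polar h q r.
Proof. by move=> fE; rewrite /polar !fE; ring. Qed.

Lemma cubic_singular_point x y q : x != 0 -> cubic x y q = 0 ->
  (forall r, polar (cubic x y) q r = 0) -> dotv y q = 0.
Proof.
move=> x_nz Fq0 Dq0; apply: contraNeq x_nz => yq_nz.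
have yq2 : dotv y q ^+ 2 != 0 by rewrite expf_neq0.
have xq : dotv x q = 0 by move/eqP: Fq0; rewrite mulf_eq0 (negbTE yq2) orbF => /eqP.
apply/eqP/dotv_inj => r; rewrite dotv0l.
move/eqP: (Dq0 r); rewrite polar_cubic xq mulr0 !mul0r addr0.
by rewrite mulf_eq0 (negbTE yq2) orbF => /eqP.
Qed.

Lemma cubic_eq_scale x x' y' c d : y' != 0 ->
  (forall q, cubic x (d *: y') q = c * cubic x' y' q) -> d ^+ 2 *: x = c *: x'.
Proof.
move=> y'_nz FE; have [q y'q] := dotv_eq1 y'_nz.
have Fq : dotv x q * d ^+ 2 = c * dotv x' q.
  by move: (FE q); rewrite /cubic dotvZl y'q mulr1 expr1n mulr1.
apply: dotv_inj => r; rewrite !dotvZl.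
move: (polarZ q r FE); rewrite !polar_cubic !dotvZl y'q !mulr1 expr1n mulr1.
have -> : 2%:R * dotv x q * d * (d * dotv y' r) = 2%:R * dotv y' r * (dotv x q * d ^+ 2).
  by ring.
rewrite Fq => /(canRL (addrK _)); rewrite mulrC => ->; ring.
Qed.

Lemma cubic_eq0 x y : y != 0 -> (forall q, cubic x y q = 0) -> x = 0.
Proof.
move=> y_nz FE; rewrite -[x]scale1r -(expr1n _ 2) (@cubic_eq_scale x x y 0 1) ?scale0r //.
by move=> q; rewrite scale1r FE mul0r.
Qed.

Lemma cubic_eq_proj_eq x y x' y' c : x != 0 -> y != 0 -> y' != 0 -> c != 0 ->
  (forall q, cubic x y q = c * cubic x' y' q) -> proj_eq x x' /\ proj_eq y y'.
Proof.
move=> x_nz y_nz y'_nz c_nz FE.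
have [d [d_nz yE]] : proj_eq y y'.
  apply: proj_eq_orthogonal => // q y'q; apply: (cubic_singular_point x_nz).
    by rewrite FE /cubic y'q expr2 !mulr0.
  by move=> r; rewrite (polarZ q r FE) polar_cubic y'q expr2 !(mulr0, mul0r, addr0).
split; last by exists d.
exists (c / d ^+ 2); split; first by rewrite mulf_neq0 // invr_eq0 expf_neq0.
apply: (scalerI (expf_neq0 2 d_nz)); rewrite scalerA mulrC divfK ?expf_neq0 //.
by apply: (cubic_eq_scale y'_nz) => q; rewrite -yE.
Qed.

Lemma cubic_eqmod_nonsingular x y x' y' c t f : nonsingular f ->
  (forall q, cubic x y q = c * cubic x' y' q + t * f q) -> (2 < n)%N -> t = 0.
Proof.
move=> f_ns FE n_gt2; have [q q_nz [yq y'q]] := common_orthogonal y y' n_gt2.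
have [r fr] := f_ns q q_nz.
move: (polar_comb q r FE); rewrite !polar_cubic yq y'q expr2 !(mulr0, mul0r, addr0, add0r).
by move/esym/eqP; rewrite mulf_eq0 (negbTE fr) orbF => /eqP.
Qed.

End CubicForms.

Section Coordinates.
Variable K : fieldType.

Lemma dotv2E (u v : 'rV[K]_2) : dotv u v = u 0 0 * v 0 0 + u 0 1 * v 0 1.
Proof. by rewrite dotvE big_ord2. Qed.

Lemma dotv3E (u v : 'rV[K]_3) :
  dotv u v = u 0 0 * v 0 0 + u 0 1 * v 0 1 + u 0 2%:R * v 0 2%:R.
Proof. by rewrite dotvE big_ord3. Qed.

Lemma meval_xvar a b k (x : 'rV[K]_a.+1) (y : 'rV[K]_b.+1) :
  (xvar K a b k).@[pt x y] = x 0 (inord k).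
Proof. by rewrite /xvar mevalXU /pt (unsplitK (inl _)). Qed.

Lemma meval_yvar a b k (x : 'rV[K]_a.+1) (y : 'rV[K]_b.+1) :
  (yvar K a b k).@[pt x y] = y 0 (inord k).
Proof. by rewrite /yvar mevalXU /pt (unsplitK (inr _)). Qed.

Lemma inord0 m : (inord 0 : 'I_m.+1) = 0.
Proof. by apply: val_inj; rewrite /= inordK. Qed.
Lemma inord1 m : (inord 1 : 'I_m.+2) = 1.
Proof. by apply: val_inj; rewrite /= inordK. Qed.
Lemma inord2 m : (inord 2 : 'I_m.+3) = 2%:R.
Proof. by apply: val_inj; rewrite /= inordK. Qed.

End Coordinates.

Section ExplicitSections.
Variable K : numFieldType.

Lemma phi_sec1E (x y : 'rV[K]_2) : phi (sec1 K) x y =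
  let: (x0, x1, y0, y1) := (x 0 0, x 0 1, y 0 0, y 0 1) in
  \row_i [:: x0 * y0 ^+ 2; x1 * y0 ^+ 2 + 2%:R * x0 * y0 * y1;
             2%:R * x1 * y0 * y1 + x0 * y1 ^+ 2; x1 * y1 ^+ 2]`_i.
Proof.
apply/rowP => i; rewrite !mxE; case: i => [[|[|[|[|//]]]] ?] /=;
by rewrite !(mevalD, mevalM, mevalMn, meval1, meval_xvar, meval_yvar, inord0, inord1).
Qed.

Lemma phi_sec2E (x y : 'rV[K]_3) : phi (sec2 K) x y =
  let: (x0, x1, x2, y0, y1, y2) := (x 0 0, x 0 1, x 0 2%:R, y 0 0, y 0 1, y 0 2%:R) in
  \row_i [:: x0 * y0 ^+ 2; x1 * y1 ^+ 2; x2 * y2 ^+ 2;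
             x0 * y1 ^+ 2 + 2%:R * x1 * y0 * y1;
             x1 * y2 ^+ 2 + 2%:R * x2 * y1 * y2;
             x2 * y0 ^+ 2 + 2%:R * x0 * y0 * y2;
             2%:R * x0 * y1 * y2 + 2%:R * x1 * y0 * y2 + 2%:R * x2 * y0 * y1;
             x1 * y0 ^+ 2 - x2 * y1 ^+ 2 + 2%:R * x0 * y0 * y1 - 2%:R * x1 * y1 * y2;
             x1 * y0 ^+ 2 - x0 * y2 ^+ 2 + 2%:R * x0 * y0 * y1 - 2%:R * x2 * y0 * y2]`_i.
Proof.
apply/rowP => i; rewrite !mxE; case: i => [[|[|[|[|[|[|[|[|[|//]]]]]]]]] ?] /=;
by rewrite !(mevalD, mevalN, mevalM, mevalMn, meval1, meval_xvar, meval_yvar);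
  rewrite !(inord0, inord1, inord2).
Qed.

Definition mon1 (q : 'rV[K]_2) : 'rV[K]_4 :=
  let: (u, w) := (q 0 0, q 0 1) in
  \row_i [:: u ^+ 3; u ^+ 2 * w; u * w ^+ 2; w ^+ 3]`_i.

Lemma cubic_sec1 x y q : cubic x y q = dotv (phi (sec1 K) x y) (mon1 q).
Proof. by rewrite phi_sec1E /cubic !dotv2E dotvE !big_ord_recl big_ord0 !mxE /=; ring. Qed.

(* [phi (sec2 K) x y] lists the coefficients of [cubic x y], except that those of
   q0^2 q1, q1^2 q2 and q0 q2^2 only enter through two differences; the information lost
   is a multiple of [cyclic_cubic]. *)
Definition mon2 (q : 'rV[K]_3) : 'rV[K]_9 :=
  let: (a, b, c) := (q 0 0, q 0 1, q 0 2%:R) in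
  \row_i [:: a ^+ 3; b ^+ 3; c ^+ 3; a * b ^+ 2; b * c ^+ 2; a ^+ 2 * c; a * b * c;
             - (b ^+ 2 * c); - (a * c ^+ 2)]`_i.

Definition cyclic_cubic (q : 'rV[K]_3) : K :=
  q 0 0 ^+ 2 * q 0 1 + q 0 1 ^+ 2 * q 0 2%:R + q 0 2%:R ^+ 2 * q 0 0.

Lemma cubic_sec2 x y : exists t, forall q,
  cubic x y q = dotv (phi (sec2 K) x y) (mon2 q) + t * cyclic_cubic q.
Proof.
exists (x 0 1 * y 0 0 ^+ 2 + 2%:R * x 0 0 * y 0 0 * y 0 1) => q.
by rewrite phi_sec2E /cubic /cyclic_cubic !dotv3E dotvE !big_ord_recl big_ord0 !mxE /=; ring.
Qed.

Definition cyclic_cubic_grad (q : 'rV[K]_3) : 'rV[K]_3 :=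
  let: (a, b, c) := (q 0 0, q 0 1, q 0 2%:R) in
  \row_i [:: 2%:R * a * b + c ^+ 2; a ^+ 2 + 2%:R * b * c; b ^+ 2 + 2%:R * a * c]`_i.

Lemma polar_cyclic_cubic q r : polar cyclic_cubic q r = dotv (cyclic_cubic_grad q) r.
Proof. by rewrite /polar /cyclic_cubic dotv3E !mxE /=; field. Qed.

Lemma cyclic_cubic_crit (a b c : K) :
  2%:R * a * b + c ^+ 2 = 0 -> a ^+ 2 + 2%:R * b * c = 0 -> b ^+ 2 + 2%:R * a * c = 0 ->
  [/\ a = 0, b = 0 & c = 0].
Proof.
move=> /eqP; rewrite addrC addr_eq0 => /eqP c2.
move=> /eqP; rewrite addr_eq0 => /eqP a2.
move=> /eqP; rewrite addr_eq0 => /eqP b2.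
have sq0 (u : K) : u ^+ 2 = 0 -> u = 0 by move/eqP; rewrite sqrf_eq0 => /eqP.
have : 9%:R * (a * b * c) ^+ 2 = 0.
  transitivity (a ^+ 2 * b ^+ 2 * c ^+ 2 + 8%:R * (a * b * c) ^+ 2); first by ring.
  by rewrite a2 b2 c2; ring.
move/eqP; rewrite mulf_eq0 pnatr_eq0 /= sqrf_eq0 !mulf_eq0 => /orP[/orP[]|] /eqP z0.
- have c0 : c = 0 by apply: sq0; rewrite c2 z0 !(mulr0, mul0r, oppr0).
  by split=> //; apply: sq0; rewrite b2 z0 c0 !(mulr0, mul0r, oppr0).
- have a0 : a = 0 by apply: sq0; rewrite a2 z0 !(mulr0, mul0r, oppr0).
  by split=> //; apply: sq0; rewrite c2 z0 a0 !(mulr0, mul0r, oppr0).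
- have b0 : b = 0 by apply: sq0; rewrite b2 z0 !(mulr0, mul0r, oppr0).
  by split=> //; apply: sq0; rewrite a2 z0 b0 !(mulr0, mul0r, oppr0).
Qed.

Lemma cyclic_cubic_nonsingular : nonsingular cyclic_cubic.
Proof.
move=> q q_nz; have : cyclic_cubic_grad q != 0.
  apply: contra q_nz => /eqP/rowP g0; move: (g0 0) (g0 1) (g0 2%:R); rewrite !mxE /=.
  move=> /cyclic_cubic_crit h /h {}h /h [a0 b0 c0]; apply/eqP/dotv_inj => r.
  by rewrite dotv3E dotv0l a0 b0 c0 !mul0r !addr0.
by case/dotv_eq1 => r gr; exists r; rewrite polar_cyclic_cubic gr oner_neq0.
Qed.

Lemma inj_morphism_sec1 : inj_morphism (sec1 K).
Proof.
split=> [x y x_nz y_nz | x y x' y' x_nz y_nz _ y'_nz [c [c_nz phiE]]].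
  apply: contra x_nz => /eqP phi0; apply/eqP/(cubic_eq0 y_nz) => q.
  by rewrite cubic_sec1 phi0 dotv0l.
by apply: (cubic_eq_proj_eq x_nz y_nz y'_nz c_nz) => q; rewrite !cubic_sec1 phiE dotvZl.
Qed.

Lemma inj_morphism_sec2 : inj_morphism (sec2 K).
Proof.
split=> [x y x_nz y_nz | x y x' y' x_nz y_nz _ y'_nz [c [c_nz phiE]]].
  apply: contra x_nz => /eqP phi0; have [t tE] := cubic_sec2 x y.
  have t0 : t = 0.
    apply: (@cubic_eqmod_nonsingular _ _ x y x y 0 t _ cyclic_cubic_nonsingular) => // q.
    by rewrite tE phi0 dotv0l mul0r !add0r.
  by apply/eqP/(cubic_eq0 y_nz) => q; rewrite tE phi0 t0 dotv0l mul0r addr0.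
have [t tE] := cubic_sec2 x y; have [t' t'E] := cubic_sec2 x' y'.
have FE q : cubic x y q = c * cubic x' y' q + (t - c * t') * cyclic_cubic q.
  by rewrite tE t'E phiE dotvZl; ring.
have /eqP := cubic_eqmod_nonsingular cyclic_cubic_nonsingular FE isT.
rewrite subr_eq0 => /eqP tE'.
by apply: (cubic_eq_proj_eq x_nz y_nz y'_nz c_nz) => q; rewrite FE tE' subrr mul0r addr0.
Qed.

End ExplicitSections.

Section Bihomogeneous.
Variables (K : fieldType) (a b : nat).
Implicit Types p q : {mpoly K[a.+1 + b.+1]}.

Lemma bihomogD d1 d2 p q : bihomog d1 d2 p -> bihomog d1 d2 q -> bihomog d1 d2 (p + q).
Proof. by move=> hp hq m /msuppD_le; rewrite mem_cat => /orP[/hp | /hq]. Qed.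

Lemma bihomogN d1 d2 p : bihomog d1 d2 p -> bihomog d1 d2 (- p).
Proof. by move=> hp m; rewrite (perm_mem (msuppN p)); apply: hp. Qed.

Lemma bihomogM d1 d2 e1 e2 p q : bihomog d1 d2 p -> bihomog e1 e2 q ->
  bihomog (d1 + e1) (d2 + e2) (p * q).
Proof.
move=> hp hq m /msuppM_le /allpairsP[[m1 m2] [/= /hp[p1 p2] /hq[q1 q2] ->]].
by rewrite -p1 -p2 -q1 -q2 -!big_split; split; apply: eq_bigr => i _; rewrite mnmDE.
Qed.

Lemma bihomog_nat k : bihomog 0 0 (k%:R : {mpoly K[a.+1 + b.+1]}).
Proof.
rewrite -mpolyC_nat => m; rewrite msuppC; case: eqP => // _.
by rewrite mem_seq1 => /eqP ->; split; apply: big1 => i _; rewrite mnm0E.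
Qed.

Lemma bihomog_xvar k : bihomog 1 0 (xvar K a b k).
Proof.
move=> m; rewrite msuppX inE => /eqP ->; split; last first.
  by apply: big1 => j _; rewrite mnm1E eq_lrshift.
rewrite (bigD1 (inord k)) //= mnm1E eqxx big1 // => i ik.
by rewrite mnm1E eq_lshift eq_sym (negbTE ik).
Qed.

Lemma bihomog_yvar k : bihomog 0 1 (yvar K a b k).
Proof.
move=> m; rewrite msuppX inE => /eqP ->; split.
  by apply: big1 => i _; rewrite mnm1E eq_shift.
rewrite (bigD1 (inord k)) //= mnm1E eqxx big1 // => j jk.
by rewrite mnm1E eq_shift eq_sym (negbTE jk).
Qed.

Lemma bihomog_xy2 i j : bihomog 1 2 (xvar K a b i * yvar K a b j ^+ 2).
Proof.
rewrite expr2.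
by have := bihomogM (@bihomog_xvar i) (bihomogM (@bihomog_yvar j) (@bihomog_yvar j)).
Qed.

Lemma bihomog_2xyy i j l :
  bihomog 1 2 (2%:R * xvar K a b i * yvar K a b j * yvar K a b l).
Proof.
by have := bihomogM (bihomogM (bihomogM (@bihomog_nat 2) (@bihomog_xvar i))
  (@bihomog_yvar j)) (@bihomog_yvar l).
Qed.

End Bihomogeneous.

Ltac bihomog_tac := repeat match goal with
  | |- bihomog _ _ (_ + _) => apply: bihomogD
  | |- bihomog _ _ (- _) => apply: bihomogN
  | |- bihomog _ _ (_ * _ ^+ 2) => apply: bihomog_xy2
  | |- bihomog _ _ (_ * _ * _ * _) => apply: bihomog_2xyy
  end.

Lemma bihomog_sec1 (K : fieldType) i : bihomog 1 2 (sec1 K i).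
Proof. by rewrite /sec1; case: i => [[|[|[|[|//]]]] ?] /=; bihomog_tac. Qed.

Lemma bihomog_sec2 (K : fieldType) i : bihomog 1 2 (sec2 K i).
Proof. by rewrite /sec2; case: i => [[|[|[|[|[|[|[|[|[|//]]]]]]]]] ?] /=; bihomog_tac. Qed.

Lemma lin_indep_phi (K : fieldType) a b k (s : 'I_k -> {mpoly K[a.+1 + b.+1]}) :
  (forall c : 'rV_k, (forall x y, dotv c (phi s x y) = 0) -> c = 0) -> lin_indep s.
Proof.
move=> span c sc0 i; have : \row_j c j = 0.
  apply: span => x y; rewrite dotvE -[RHS](meval0 (pt x y)) -sc0 raddf_sum.
  by apply: eq_bigr => j _; rewrite /= mevalZ !mxE.
by move/rowP/(_ i); rewrite !mxE.
Qed.

Ltac eval_dotv_phi phiE :=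
  rewrite phiE !mxE /= dotvE !big_ord_recl big_ord0 !mxE /=
    !(expr2, mul0r, mulr0, mul1r, mulr1, add0r, addr0, subr0, sub0r, oppr0, mulrN1).

Section LinearIndependence.
Variable K : numFieldType.

Lemma lin_indep_sec1 : lin_indep (sec1 K).
Proof.
apply: lin_indep_phi => c E; pose e i : 'rV[K]_2 := delta_mx 0 i.
have := E (e 0) (e 0); eval_dotv_phi phi_sec1E; move=> c0.
have := E (e 1) (e 0); eval_dotv_phi phi_sec1E; move=> c1.
have := E (e 0) (e 1); eval_dotv_phi phi_sec1E; move=> c2.
have := E (e 1) (e 1); eval_dotv_phi phi_sec1E; move=> c3.
apply: dotv_inj => r; rewrite dotv0l dotvE !big_ord_recl big_ord0.
by rewrite c0 c1 c2 c3 !mul0r !addr0.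
Qed.

Lemma lin_indep_sec2 : lin_indep (sec2 K).
Proof.
apply: lin_indep_phi => c E; pose e i : 'rV[K]_3 := delta_mx 0 i.
have := E (e 0) (e 0); eval_dotv_phi phi_sec2E; move=> c0.
have := E (e 1) (e 1); eval_dotv_phi phi_sec2E; move=> c1.
have := E (e 2%:R) (e 2%:R); eval_dotv_phi phi_sec2E; move=> c2.
have := E (e 0) (e 1); eval_dotv_phi phi_sec2E; move=> c3.
have := E (e 1) (e 2%:R); eval_dotv_phi phi_sec2E; move=> c4.
have := E (e 2%:R) (e 0); eval_dotv_phi phi_sec2E; move=> c5.
have := E (e 2%:R) (e 1); eval_dotv_phi phi_sec2E; move/eqP; rewrite oppr_eq0 => /eqP c7.
have := E (e 0) (e 2%:R); eval_dotv_phi phi_sec2E; move/eqP; rewrite oppr_eq0 => /eqP c8.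
have := E (e 0) (e 1 + e 2%:R); eval_dotv_phi phi_sec2E.
rewrite c3 c8 add0r subr0 => /eqP; rewrite mulf_eq0 pnatr_eq0 orbF => /eqP c6.
apply: dotv_inj => r; rewrite dotv0l dotvE !big_ord_recl big_ord0.
by rewrite c0 c1 c2 c3 c4 c5 c6 c7 c8 !mul0r !addr0.
Qed.

End LinearIndependence.

Section Minimality.
Variable K : numClosedFieldType.

Definition ymon (l : 'I_3) (y : 'rV[K]_2) : K := y 0 0 ^+ (2 - l) * y 0 1 ^+ l.

(* The coefficient of x_j y0^(2-l) y1^l; it only inspects the exponents of x1 and y1, so
   it is meaningful for p of bidegree (1, 2). *)
Definition coef12 (p : {mpoly K[1.+1 + 1.+1]}) (j : 'I_2) (l : 'I_3) : K :=
  \sum_(m <- msupp p) p@_m * ((m (lshift 2 1) == j) && (m (rshift 2 1) == l))%:R.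

Lemma meval_bihomog12 (p : {mpoly K[1.+1 + 1.+1]}) x y : bihomog 1 2 p ->
  p.@[pt x y] = \sum_(j < 2) \sum_(l < 3) coef12 p j l * x 0 j * ymon l y.
Proof.
move=> p_bh; rewrite mevalE.
transitivity (\sum_(m <- msupp p) \sum_(j < 2) \sum_(l < 3)
  p@_m * ((m (lshift 2 1) == j) && (m (rshift 2 1) == l))%:R * x 0 j * ymon l y); last first.
  rewrite exchange_big; apply: eq_bigr => j _; rewrite exchange_big; apply: eq_bigr => l _.
  by rewrite /coef12 !big_distrl.
apply: eq_big_seq => m /p_bh[]; rewrite big_split_ord /= !big_ord2 !big_ord3.
rewrite /pt !(unsplitK (inl _), unsplitK (inr _)) /ymon /=.
move: (m (lshift 2 0)) (m (lshift 2 1)) (m (rshift 2 0)) (m (rshift 2 1)) => a0 a1 b0 b1 ha hb.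
have [[-> ->]|[-> ->]] : (a0 = 1 /\ a1 = 0 \/ a0 = 0 /\ a1 = 1)%N by lia.
all: have [[-> ->]|[[-> ->]|[-> ->]]] :
  (b0 = 2 /\ b1 = 0 \/ b0 = 1 /\ b1 = 1 \/ b0 = 0 /\ b1 = 2)%N by lia.
all: by rewrite /=; ring.
Qed.

Lemma singular_pencil n (B0 B1 : 'M[K]_n.+1) :
  exists x0 x1 : K, (x0 != 0) || (x1 != 0) /\
    exists2 w : 'rV_n.+1, w != 0 & w *m (x0 *: B0 + x1 *: B1) = 0.
Proof.
have [B0_sing | B0_inv] := boolP (\det B0 == 0).
  have [w w0 wB] := det0P B0_sing; exists 1, 0; split; first by rewrite oner_eq0.
  by exists w; rewrite // scale1r scale0r addr0.
have B0_unit : B0 \in unitmx by rewrite unitmxE unitfE.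
have /closed_rootP[mu] : size (char_poly (B1 *m invmx B0)) != 1 by rewrite size_char_poly.
rewrite -eigenvalue_root_char => /eigenvalueP[w wE w0].
exists (- mu), 1; split; first by rewrite oner_eq0 orbT.
exists w => //; have wB1 : w *m B1 = mu *: (w *m B0).
  by rewrite -(mulmxKV B0_unit (w *m B1)) -[w *m B1 *m _]mulmxA wE scalemxAl.
by rewrite mulmxDr scale1r -!scalemxAr wB1 scaleNr addNr.
Qed.

Definition row2 (u v : K) : 'rV[K]_2 := \row_j [:: u; v]`_j.

Lemma row2_eq0 u v : (row2 u v == 0) = (u == 0) && (v == 0).
Proof.
apply/eqP/andP => [/rowP uv0 | [/eqP u0 /eqP v0]].
  by move: (uv0 0) (uv0 1); rewrite !mxE /= => -> ->.
by apply/rowP => j; rewrite !mxE; case: j => [[|[|//]] ?] /=.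
Qed.

Lemma row2_proj_eq u v u' v' : proj_eq (row2 u v) (row2 u' v') -> u * v' = v * u'.
Proof. by case=> c [_ /rowP e]; move: (e 0) (e 1); rewrite !mxE /= => -> ->; ring. Qed.

Lemma ymon_row2 l u v : ymon l (row2 u v) = u ^+ (2 - l) * v ^+ l.
Proof. by rewrite /ymon !mxE. Qed.

Lemma veronese_secant (w : 'rV[K]_3) : w != 0 ->
  exists y y' a b, [/\ y != 0, y' != 0, ~ proj_eq y y', a != 0 &
    [/\ a * ymon 0 y + b * ymon 0 y' = w 0 0, a * ymon 1 y + b * ymon 1 y' = w 0 1
       & a * ymon 2%:R y + b * ymon 2%:R y' = w 0 2%:R]].
Proof.
move=> w_nz; have [w00 | w0_nz] := eqVneq (w 0 0) 0; last first.
  exists (row2 1 (w 0 1 / w 0 0)), (row2 0 1), (w 0 0).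
  exists ((w 0 0 * w 0 2%:R - w 0 1 ^+ 2) / w 0 0).
  split; rewrite ?row2_eq0 ?oner_eq0 ?andbF ?andFb //.
    by move/row2_proj_eq/eqP; rewrite mulr0 mulr1 oner_eq0.
  by rewrite !ymon_row2 /=; split; field.
have [w22 | w2_nz] := eqVneq (w 0 2%:R) 0; last first.
  exists (row2 (w 0 1 / w 0 2%:R) 1), (row2 1 0), (w 0 2%:R), (- (w 0 1 ^+ 2 / w 0 2%:R)).
  split; rewrite ?row2_eq0 ?oner_eq0 ?andbF ?andFb //.
    by move/row2_proj_eq/eqP; rewrite mulr0 mul1r eq_sym oner_eq0.
  by rewrite !ymon_row2 w00 /=; split; field.
have w1_nz : w 0 1 != 0.
  apply: contra w_nz => /eqP w11; apply/eqP/dotv_inj => r.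
  by rewrite dotv3E dotv0l w00 w11 w22 !mul0r !addr0.
exists (row2 1 1), (row2 1 (-1)), (w 0 1 / 2%:R), (- (w 0 1 / 2%:R)).
split; rewrite ?row2_eq0 ?oner_eq0 ?andFb ?mulf_neq0 ?invr_eq0 ?pnatr_eq0 //.
  by move/row2_proj_eq/eqP; rewrite mulr1 mul1r eq_sym -addr_eq0 -mulr2n pnatr_eq0.
by rewrite !ymon_row2 w00 w22 /=; split; field.
Qed.

Lemma not_inj_morphism_le3 n (s : 'I_n.+1 -> {mpoly K[1.+1 + 1.+1]}) : (n < 3)%N ->
  (forall i, bihomog 1 2 (s i)) -> ~ inj_morphism s.
Proof.
move=> n_lt3 s_bh [phi_nz phi_inj].
(* Column i of B j holds the coefficients of x_j in s i; zero columns pad it to a square. *)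
pose B j : 'M[K]_3 := \matrix_(l, i) if (i < n.+1)%N then coef12 (s (inord i)) j l else 0.
have [x0 [x1 [x_nz [w w_nz wB]]]] := singular_pencil (B 0) (B 1).
have [y [y' [a [b [y_nz y'_nz yy' a_nz [e0 e1 e2]]]]]] := veronese_secant w_nz.
set x := row2 x0 x1; have {}x_nz : x != 0 by rewrite row2_eq0 negb_and.
have ab0 i : a * (s i).@[pt x y] + b * (s i).@[pt x y'] = 0.
  have := congr1 (fun v : 'rV[K]_3 => v 0 (widen_ord n_lt3 i)) wB.
  rewrite /= !mxE big_ord3 !mxE /= ltn_ord inord_val -e0 -e1 -e2 => <-.
  by rewrite !meval_bihomog12 // !big_ord2 !big_ord3 /x !mxE /=; ring.
have phiE : phi s x y = (- b / a) *: phi s x y'.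
  apply/rowP => i; rewrite !mxE; apply: (mulfI a_nz).
  by move/eqP: (ab0 i); rewrite addr_eq0 => /eqP ->; rewrite mulrA [a * _]mulrC divfK // mulNr.
have c_nz : - b / a != 0.
  by apply: contraNneq (phi_nz x y x_nz y_nz) => c0; rewrite phiE c0 scale0r.
apply/yy'/(proj2 (phi_inj x y x y' x_nz y_nz x_nz y'_nz _)).
by exists (- b / a).
Qed.

Lemma injdim_cand_ge3 M : injdim_cand K 1 1 M -> (3 <= M)%N.
Proof.
case=> s [s_bh [_ s_inj]]; rewrite leqNgt; apply/negP => M_lt3.
exact: not_inj_morphism_le3 M_lt3 s_bh s_inj.
Qed.

End Minimality.

Theorem proposition4p2 (R : realType) :
  inj_morphism (sec1 R[i]) /\ inj_morphism (sec2 R[i]) /\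
  injdim_O12_eq R[i] 1 1 3 /\ injdim_O12_le R[i] 2 2 8.
Proof.
have cand1 : injdim_cand R[i] 1 1 3.
  exists (sec1 R[i]); split; first exact: bihomog_sec1.
  by split; [exact: lin_indep_sec1 | exact: inj_morphism_sec1].
have cand2 : injdim_cand R[i] 2 2 8.
  exists (sec2 R[i]); split; first exact: bihomog_sec2.
  by split; [exact: lin_indep_sec2 | exact: inj_morphism_sec2].
split; first exact: inj_morphism_sec1.
split; first exact: inj_morphism_sec2.
by split; [split=> //; exact: injdim_cand_ge3 | exists 8].
Qed.
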